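(* Let $a=a_0+a_1e_1+a_2e_2+a_3e_3$ and $b=b_0+b_1e_1+b_2e_2+b_3e_3$ be elements of $C\ell_2\setminus\mathbb{R}$ with $a_0=b_0$ and $G(a)=G(b)$. Then the general solution of the linear equation $ax=xb$ (in $x\in C\ell_2$) is $$x=y-\frac{a'ay-a'yb-ayb'+ybb'}{2(|Cim(a)|^2+|Cim(b)|^2)},\qquad y\in C\ell_2\text{ arbitrary}.$$
   Context: $C\ell_2$ is the 4-dimensional real associative algebra with basis $1,e_1,e_2,e_3$ and multiplication $e_1^2=e_2^2=1$, $e_3^2=-1$, $e_1e_2=e_3=-e_2e_1$, $e_1e_3=e_2=-e_3e_1$, $e_3e_2=e_1=-e_2e_3$; $\mathbb{R}$ is identified with $\mathbb{R}\cdot 1$. For $a=a_0+a_1e_1+a_2e_2+a_3e_3$ ($a_i\in\mathbb{R}$): $a'=a_0+a_1e_1+a_2e_2-a_3e_3$, $G(a)=a_1^2+a_2^2-a_3^2$, $|Cim(a)|^2=a_1^2+a_2^2+a_3^2$. *)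

From Stdlib Require Import Reals.
Open Scope R_scope.

(* a = c0 + c1 e1 + c2 e2 + c3 e3 *)
Record Cl2 := mkCl2 { c0 : R; c1 : R; c2 : R; c3 : R }.

Definition cl_of_real (r : R) : Cl2 := mkCl2 r 0 0 0.

Definition cl_add (a b : Cl2) : Cl2 :=
  mkCl2 (c0 a + c0 b) (c1 a + c1 b) (c2 a + c2 b) (c3 a + c3 b).

Definition cl_sub (a b : Cl2) : Cl2 :=
  mkCl2 (c0 a - c0 b) (c1 a - c1 b) (c2 a - c2 b) (c3 a - c3 b).

Definition cl_scale (r : R) (a : Cl2) : Cl2 :=
  mkCl2 (r * c0 a) (r * c1 a) (r * c2 a) (r * c3 a).

(* product from e1^2=e2^2=1, e3^2=-1, e1e2=e3=-e2e1, e1e3=e2=-e3e1,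
   e3e2=e1=-e2e3, extended bilinearly *)
Definition cl_mul (a b : Cl2) : Cl2 :=
  mkCl2
    (c0 a * c0 b + c1 a * c1 b + c2 a * c2 b - c3 a * c3 b)
    (c0 a * c1 b + c1 a * c0 b + c3 a * c2 b - c2 a * c3 b)
    (c0 a * c2 b + c2 a * c0 b + c1 a * c3 b - c3 a * c1 b)
    (c0 a * c3 b + c3 a * c0 b + c1 a * c2 b - c2 a * c1 b).

Definition cl_prime (a : Cl2) : Cl2 := mkCl2 (c0 a) (c1 a) (c2 a) (- c3 a).

Definition clG (a : Cl2) : R := c1 a ^ 2 + c2 a ^ 2 - c3 a ^ 2.

Definition Cim_norm2 (a : Cl2) : R := c1 a ^ 2 + c2 a ^ 2 + c3 a ^ 2.

(* Put [L x = a x - x b] and let [T y] be the numerator in the formula, so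
   that [T y = a' (L y) - (L y) b'].  When [a0 = b0] a coordinate computation
   gives [L (T y) = N (L y) + (G b - G a) (v y + y w)], where
   [N = 2 (|Cim a|^2 + |Cim b|^2)] and [v], [w] are [a'], [b'] without their
   scalar parts.  So if [G a = G b], then [L (y - T y / N) = 0] for every [y],
   while a solution [x] has [T x = 0] and is obtained from [y = x].  [N > 0]
   because [a] is not real. *)
From Pilot Require Import Defs.
From Stdlib Require Import Reals Lra Psatz.
Open Scope R_scope.

Definition cl_zero : Cl2 := cl_of_real 0.

Definition cl_vec (a : Cl2) : Cl2 := mkCl2 0 (Defs.c1 a) (c2 a) (c3 a).

Definition sylvester (a b x : Cl2) : Cl2 := cl_sub (cl_mul a x) (cl_mul x b).

Definition correction (a b y : Cl2) : Cl2 :=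
  cl_add
    (cl_sub
       (cl_sub (cl_mul (cl_mul (cl_prime a) a) y)
               (cl_mul (cl_mul (cl_prime a) y) b))
       (cl_mul (cl_mul a y) (cl_prime b)))
    (cl_mul (cl_mul y b) (cl_prime b)).

Ltac cl_ring :=
  repeat match goal with c : Cl2 |- _ => destruct c end;
  cbv beta iota delta [cl_zero cl_of_real cl_vec sylvester correction
    cl_add cl_sub cl_scale cl_mul cl_prime Cim_norm2 clG c0 Defs.c1 c2 c3];
  f_equal; ring.

Lemma sylvester_eq0 (a b x : Cl2) :
  sylvester a b x = cl_zero <-> cl_mul a x = cl_mul x b.
Proof.
  unfold sylvester; split.
  - destruct (cl_mul a x), (cl_mul x b); cbn; intros H; injection H.
    intros; f_equal; lra.
  - intros ->; cl_ring.
Qed.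

Lemma Cim_norm2_pos (a : Cl2) :
  (forall r : R, a <> cl_of_real r) -> 0 < Cim_norm2 a.
Proof.
  destruct a as [a0 a1 a2 a3]; unfold Cim_norm2; cbn; intros ha.
  destruct (Rlt_dec 0 (a1 ^ 2 + a2 ^ 2 + a3 ^ 2)) as [Hpos | Hnpos]; [exact Hpos |].
  exfalso; apply (ha a0); unfold cl_of_real.
  f_equal; nra.
Qed.

Lemma correction_sylvester (a b y : Cl2) :
  correction a b y =
  cl_sub (cl_mul (cl_prime a) (sylvester a b y))
         (cl_mul (sylvester a b y) (cl_prime b)).
Proof. cl_ring. Qed.

Lemma correction_of_solution (a b x : Cl2) :
  sylvester a b x = cl_zero -> correction a b x = cl_zero.
Proof. intros Hx; rewrite correction_sylvester, Hx; cl_ring. Qed.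

Lemma sylvester_sub_scale (a b y t : Cl2) (c : R) :
  sylvester a b (cl_sub y (cl_scale c t)) =
  cl_sub (sylvester a b y) (cl_scale c (sylvester a b t)).
Proof. cl_ring. Qed.

Lemma sylvester_correction (a b y : Cl2) : c0 a = c0 b ->
  sylvester a b (correction a b y) =
  cl_add (cl_scale (2 * (Cim_norm2 a + Cim_norm2 b)) (sylvester a b y))
         (cl_scale (clG b - clG a)
            (cl_add (cl_mul (cl_vec (cl_prime a)) y)
                    (cl_mul y (cl_vec (cl_prime b))))).
Proof.
  destruct a as [a0 a1 a2 a3], b as [b0 b1 b2 b3]; simpl; intros <-.
  cl_ring.
Qed.

Lemma cl_add_scale0 (z w : Cl2) : cl_add z (cl_scale 0 w) = z.
Proof. cl_ring. Qed.

Lemma sylvester_correction_balanced (a b y : Cl2) :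
  c0 a = c0 b -> clG a = clG b ->
  sylvester a b (correction a b y) =
  cl_scale (2 * (Cim_norm2 a + Cim_norm2 b)) (sylvester a b y).
Proof.
  intros h0 hG.
  rewrite sylvester_correction, hG, Rminus_diag by exact h0.
  apply cl_add_scale0.
Qed.

Lemma cl_sub_scale_zero (x : Cl2) (c : R) : cl_sub x (cl_scale c cl_zero) = x.
Proof. cl_ring. Qed.

Lemma cl_sub_scale_inv (z : Cl2) (c : R) :
  c <> 0 -> cl_sub z (cl_scale (/ c) (cl_scale c z)) = cl_zero.
Proof.
  intros Hc; destruct z; unfold cl_zero, cl_of_real, cl_sub, cl_scale; cbn.
  f_equal; field; exact Hc.
Qed.

Theorem theorem5p1 (a b : Cl2)
  (ha : forall r : R, a <> cl_of_real r)
  (hb : forall r : R, b <> cl_of_real r)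
  (h0 : c0 a = c0 b) (hG : clG a = clG b) :
  forall x : Cl2,
    cl_mul a x = cl_mul x b <->
    exists y : Cl2,
      x = cl_sub y
            (cl_scale (/ (2 * (Cim_norm2 a + Cim_norm2 b)))
               (cl_add
                  (cl_sub
                     (cl_sub (cl_mul (cl_mul (cl_prime a) a) y)
                             (cl_mul (cl_mul (cl_prime a) y) b))
                     (cl_mul (cl_mul a y) (cl_prime b)))
                  (cl_mul (cl_mul y b) (cl_prime b)))).
Proof.
  intros x; rewrite <- sylvester_eq0.
  change (sylvester a b x = cl_zero <->
          exists y, x = cl_sub y (cl_scale (/ (2 * (Cim_norm2 a + Cim_norm2 b)))
                                           (correction a b y))).
  assert (HN : 2 * (Cim_norm2 a + Cim_norm2 b) <> 0).
  { pose proof (Cim_norm2_pos a ha); pose proof (Cim_norm2_pos b hb); lra. }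
  split.
  - intros Hx; exists x.
    rewrite (correction_of_solution a b x Hx).
    symmetry; apply cl_sub_scale_zero.
  - intros [y ->].
    rewrite sylvester_sub_scale, sylvester_correction_balanced by assumption.
    apply cl_sub_scale_inv; exact HN.
Qed.
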